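(* Let $I, J$ be completely regular Hausdorff spaces, $X, Y$ Hausdorff locally convex topological vector spaces over $\mathbb{C}$, with $X\otimes Y$ given a locally convex Hausdorff topology for which $(x,y)\mapsto x\otimes y$ is continuous. Let $V$, $W$, $U$ be Nachbin families on $I$, $J$, $I \times J$ respectively. Suppose (i) for all $(t, s) \in I \times J$, $\overline{CV_0(I, X)(t) \otimes CW_0(J, Y)(s)} = \overline{CU_{0}(I \times J, X \otimes Y)(t, s)}$, and (ii) $CV_{0}(I, X) \otimes CW_{0}(J, Y) \subset CU_{0}(I \times J, X \otimes Y)$. Then $CU_{0}(I \times J, X \otimes Y)$ is the closure of $CV_{0}(I, X) \otimes CW_{0}(J, Y)$ in the topology of $CU_{0}(I \times J, X \otimes Y)$.
   Context: A Nachbin family on $\Omega$ is a set $V$ of upper semicontinuous functions $\Omega\to\mathbb{R}_+$ such that for $v_1,v_2\in V$ there are $\lambda\ge0$, $w\in V$ with $v_1,v_2\le\lambda w$, and for each $x$ some $v\in V$ has $v(x)>0$. For a locally convex space $Z$ with seminorms $\mathfrak{A}$, $g:\Omega\to Z$ vanishes at infinity if for each $p\in\mathfrak{A}$, $\epsilon>0$ the closure of $\{x:p(g(x))\ge\epsilon\}$ is compact; $CV_0(\Omega,Z)=\{f\in C(\Omega,Z):vf\text{ vanishes at infinity }\forall v\in V\}$, topologized by seminorms $f\mapsto\sup_x v(x)p(f(x))$. For a set $\mathcal{W}$ of functions, $\mathcal{W}(s)=\{f(s):f\in\mathcal{W}\}$. For $f:I\to X$, $g:J\to Y$, $(f\otimes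 g)(t,s)=f(t)\otimes g(s)$, and $\mathcal{W}\otimes\mathcal{V}=\mathrm{span}\{f\otimes g\}$; for subsets $X_1\subset X$, $Y_1\subset Y$, $X_1\otimes Y_1=\mathrm{span}\{x\otimes y:x\in X_1,y\in Y_1\}$. *)

From HB Require Import structures.
From mathcomp Require Import all_boot all_order all_algebra.
From mathcomp Require Import all_classical all_reals all_analysis.
From mathcomp Require Export complex.
Export Order.TTheory GRing.Theory Num.Theory.

Set Implicit Arguments.
Unset Strict Implicit.
Unset Printing Implicit Defensive.

Local Open Scope classical_set_scope.
Local Open Scope ring_scope.

Definition is_seminorm (R : realType) (X : lmodType R[i]) (p : X -> R) : Prop :=
  (forall x y, p (x + y) <= p x + p y) /\
  (forall (a : R[i]) x, p (a *: x) = ComplexField.Normc.normc a * p x).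

(* A locally convex topology on X, given by a family of seminorms (p i)_i *)
Definition lc_family (R : realType) (X : lmodType R[i]) (idx : Type)
  (p : idx -> X -> R) : Prop := forall i, is_seminorm (p i).

Definition lc_hausdorff (R : realType) (X : lmodType R[i]) (idx : Type)
  (p : idx -> X -> R) : Prop := forall x, (forall i, p i x = 0) -> x = 0.

(* Closure of A in the (locally convex) topology generated by the seminorms
   p i, i ranging over the admissible indices P: z is in the closure of A iff
   every basic neighbourhood {y | p i_1 (y - z) < e, ..., p i_n (y - z) < e}
   of z meets A. *)
Definition lc_closure (R : realType) (T : zmodType) (idx : Type)
  (P : set idx) (p : idx -> T -> R) (A : set T) : set T :=
  fun z => forall (n : nat) (k : 'I_n -> idx), (forall j, P (k j)) ->
    forall e : R, 0 < e ->
      exists2 a, A a & forall j, p (k j) (z - a) < e.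

Definition lc_continuous (R : realType) (O : topologicalType) (X : zmodType)
  (idx : Type) (p : idx -> X -> R) (f : O -> X) : Prop :=
  forall (x : O) (i : idx) (e : R), 0 < e ->
    \forall y \near x, p i (f y - f x) < e.

Definition bilinear_map (R : realType) (X Y Z : lmodType R[i])
  (b : X -> Y -> Z) : Prop :=
  (forall y, linear (fun x => b x y)) /\ (forall x, linear (b x)).

Definition is_tensor_product (R : realType) (X Y Z : lmodType R[i])
  (tens : X -> Y -> Z) : Prop :=
  bilinear_map tens /\
  forall (W : lmodType R[i]) (B : X -> Y -> W), bilinear_map B ->
    exists L : Z -> W, [/\ linear L, (forall x y, L (tens x y) = B x y) &
      forall L' : Z -> W, linear L' -> (forall x y, L' (tens x y) = B x y) ->
        L' = L].

Definition tensor_continuous (R : realType) (X Y Z : lmodType R[i])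
  (iX iY iZ : Type) (pX : iX -> X -> R) (pY : iY -> Y -> R)
  (pZ : iZ -> Z -> R) (tens : X -> Y -> Z) : Prop :=
  forall (x0 : X) (y0 : Y) (r : iZ) (e : R), 0 < e ->
    exists (n m : nat) (a : 'I_n -> iX) (b : 'I_m -> iY) (d : R), 0 < d /\
      forall x y, (forall j, pX (a j) (x - x0) < d) ->
                  (forall j, pY (b j) (y - y0) < d) ->
                  pZ r (tens x y - tens x0 y0) < e.

Definition tensor_span (R : realType) (X Y Z : lmodType R[i])
  (tens : X -> Y -> Z) (X1 : set X) (Y1 : set Y) : set Z :=
  fun z => exists (n : nat) (c : 'I_n -> R[i]) (x : 'I_n -> X) (y : 'I_n -> Y),
    (forall k, X1 (x k) /\ Y1 (y k)) /\ z = \sum_(k < n) c k *: tens (x k) (y k).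

Definition fun_tensor_span (R : realType) (I J : Type) (X Y Z : lmodType R[i])
  (tens : X -> Y -> Z) (F : set (I -> X)) (G : set (J -> Y)) : set (I * J -> Z) :=
  fun h => exists (n : nat) (c : 'I_n -> R[i]) (f : 'I_n -> I -> X)
      (g : 'I_n -> J -> Y),
    (forall k, F (f k) /\ G (g k)) /\
    h = (fun ts => \sum_(k < n) c k *: tens (f k ts.1) (g k ts.2)).

Definition evals (S T : Type) (W : set (S -> T)) (s : S) : set T :=
  [set f s | f in W].

Definition upper_semicont (R : realType) (O : topologicalType) (v : O -> R) :=
  forall (x : O) (e : R), 0 < e -> \forall y \near x, v y < v x + e.

Definition nachbin_family (R : realType) (O : topologicalType)
  (V : set (O -> R)) : Prop :=
  [/\ (forall v, V v -> upper_semicont v /\ forall x, 0 <= v x),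
      (forall v1 v2, V v1 -> V v2 -> exists (l : R) (w : O -> R),
         [/\ 0 <= l, V w & forall x, v1 x <= l * w x /\ v2 x <= l * w x]) &
      (forall x, exists2 v, V v & 0 < v x)].

Definition vanishes_at_infinity (R : realType) (O : topologicalType)
  (Z : zmodType) (idx : Type) (p : idx -> Z -> R) (g : O -> Z) : Prop :=
  forall (i : idx) (e : R), 0 < e -> compact (closure [set x | e <= p i (g x)]).

Definition CV0 (R : realType) (O : topologicalType) (Z : lmodType R[i])
  (idx : Type) (p : idx -> Z -> R) (V : set (O -> R)) : set (O -> Z) :=
  fun f => lc_continuous p f /\
    forall v, V v -> vanishes_at_infinity p (fun x => real_complex R (v x) *: f x).

Definition weighted_sup (R : realType) (O : Type) (Z : zmodType)
  (v : O -> R) (q : Z -> R) (f : O -> Z) : R :=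
  sup [set v x * q (f x) | x in [set: O]].

Definition CV0_seminorm (R : realType) (O : Type) (Z : zmodType) (idx : Type)
  (p : idx -> Z -> R) (vi : (O -> R) * idx) (f : O -> Z) : R :=
  weighted_sup vi.1 (p vi.2) f.

Definition CV0_index (R : realType) (O : Type) (idx : Type)
  (V : set (O -> R)) : set ((O -> R) * idx) := fun vi => V vi.1.

(* Fix F in CU_0, finitely many weights u_j in U with seminorms r_j, and e > 0.
   At each point z, hypothesis (i) approximates F z by h_z z with h_z in the
   tensor span; as h_z is continuous by (ii) and the u_j are upper
   semicontinuous, h_z approximates F in all the weighted seminorms on a
   rectangle A_z x B_z around z.  Since F vanishes at infinity, u_j p(F) < e
   outside some compact rectangle K1 x K2.  A partition of unity on K1 x K2
   subordinate to the rectangles and made of products phi_q(t) psi_q(s) (one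
   partition on K2 for each t, then one on K1, as in the tube lemma) glues the
   h_z into a = sum_q phi_q psi_q h_q.  This stays in the tensor span because
   CV_0 spaces are stable under multiplication by continuous [0,1]-valued
   functions, and convexity of the seminorms gives u_j p(F - a) <= e. *)

From HB Require Import structures.
From mathcomp Require Import all_boot all_order all_algebra.
From mathcomp Require Import all_classical all_reals all_analysis.
From mathcomp Require Import complex.
Import Order.TTheory GRing.Theory Num.Theory.
Import numFieldNormedType.Exports.
Local Open Scope classical_set_scope.
Local Open Scope ring_scope.

Section Seminorm.
Context {R : realType} {X : lmodType R[i]} {p : X -> R}.
Hypothesis hp : is_seminorm p.

Lemma seminormZ_real (r : R) x : p (real_complex R r *: x) = `|r| * p x.
Proof. by rewrite hp.2 /= expr0n /= addr0 sqrtr_sqr. Qed.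

Lemma seminormZ_ge0 (r : R) x : 0 <= r -> p (real_complex R r *: x) = r * p x.
Proof. by move=> r0; rewrite seminormZ_real ger0_norm. Qed.

Lemma seminorm0 : p 0 = 0.
Proof.
rewrite -(scale0r 0) -[0 : R[i]]/(real_complex R 0).
by rewrite seminormZ_real normr0 mul0r.
Qed.

Lemma seminormN x : p (- x) = p x.
Proof.
rewrite -scaleN1r -(rmorphN1 (real_complex R)).
by rewrite seminormZ_real normrN normr1 mul1r.
Qed.

Lemma seminorm_ge0 x : 0 <= p x.
Proof.
have := hp.1 x (- x); rewrite subrr seminorm0 seminormN => H.
by rewrite -(@pmulr_rge0 _ 2) // mulr2n mulrDl mul1r.
Qed.

Lemma seminormB_ge x y : p x - p y <= p (x - y).
Proof. by rewrite lerBlDr; have := hp.1 (x - y) y; rewrite subrK. Qed.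

Lemma seminorm_sum (T : Type) (s : seq T) (F : T -> X) :
  p (\sum_(i <- s) F i) <= \sum_(i <- s) p (F i).
Proof.
elim: s => [|a s IH]; first by rewrite !big_nil seminorm0.
by rewrite !big_cons; apply: le_trans (hp.1 _ _) _; exact: lerD.
Qed.

Lemma seminorm_sub_convex_sum {T : eqType} {s : seq T} {rho : T -> R}
    {H : T -> X} {f : X} {u c : R} :
  0 <= u -> (forall q, q \in s -> 0 <= rho q) -> \sum_(q <- s) rho q <= 1 ->
  (\sum_(q <- s) rho q = 1 \/ u * p f <= c) ->
  (forall q, q \in s -> 0 < rho q -> u * p (f - H q) <= c) ->
  u * p (f - \sum_(q <- s) real_complex R (rho q) *: H q) <= c.
Proof.
move=> u0 rho0 S1 S1_or_f Hc; set S := \sum_(q <- s) rho q in S1 S1_or_f *.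
have S0 : 0 <= 1 - S by rewrite subr_ge0.
have -> : f - \sum_(q <- s) real_complex R (rho q) *: H q =
    real_complex R (1 - S) *: f +
    \sum_(q <- s) real_complex R (rho q) *: (f - H q).
  rewrite rmorphB rmorph1 scalerBl scale1r.
  under [E in _ = _ + E]eq_bigr do rewrite scalerBr.
  by rewrite sumrB -scaler_suml -rmorph_sum addrA subrK.
have termwise : \sum_(q <- s) rho q * (u * p (f - H q)) <= S * c.
  rewrite /S mulr_suml big_seq_cond [leRHS]big_seq_cond.
  apply: ler_sum => q /andP[qs _]; have := rho0 q qs.
  rewrite le0r => /orP[/eqP->|rq]; first by rewrite !mul0r.
  by rewrite ler_pM2l // Hc.
apply: (@le_trans _ _ ((1 - S) * (u * p f) + S * c)).
  apply: le_trans (ler_wpM2l u0 (hp.1 _ _)) _.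
  rewrite (seminormZ_ge0 _ _ S0) mulrDr mulrCA lerD2l.
  apply: le_trans (ler_wpM2l u0 (seminorm_sum _ _ _)) _.
  rewrite mulr_sumr; apply: le_trans _ termwise.
  rewrite big_seq_cond [leRHS]big_seq_cond.
  apply: ler_sum => q /andP[qs _].
  by rewrite (seminormZ_ge0 _ _ (rho0 q qs)) mulrCA.
case: S1_or_f => [->|fc]; first by rewrite subrr mul0r add0r mul1r.
apply: le_trans (lerD (ler_wpM2l S0 fc) (lexx _)) _.
by rewrite mulrBl mul1r subrK.
Qed.

End Seminorm.

Lemma lc_continuousB {R : realType} {O : topologicalType} {X : lmodType R[i]}
    {idx : Type} {p : idx -> X -> R} {f g : O -> X} :
  lc_family p -> lc_continuous p f -> lc_continuous p g ->
  lc_continuous p (fun x => f x - g x).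
Proof.
move=> hp fc gc x i e e0; have e2 : 0 < e / 2 by rewrite divr_gt0.
apply: filterS2 (fc x i _ e2) (gc x i _ e2) => y fy gy.
have -> : (f y - g y) - (f x - g x) = (f y - f x) - (g y - g x).
  by rewrite /= opprB [in RHS]opprB addrACA [in RHS]addrACA [- g y + _]addrC.
rewrite [e]splitr; apply: le_lt_trans ((hp i).1 _ _) _.
by rewrite (seminormN (hp i)) ltrD.
Qed.

Lemma upper_semicont_seminorm_near {R : realType} {O : topologicalType}
    {Z : lmodType R[i]} {idx : Type} {p : idx -> Z -> R} (i : idx)
    (u : O -> R) (g : O -> Z) (z : O) (e : R) :
  lc_family p -> upper_semicont u -> 0 <= u z -> lc_continuous p g ->
  (u z + 1) * p i (g z) < e -> \forall w \near z, u w * p i (g w) < e.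
Proof.
move=> hp usc uz0 gc gz; have hq := hp i.
have uz1 : 0 < u z + 1 by rewrite ltr_wpDl.
have d0 : 0 < (e - (u z + 1) * p i (g z)) / (u z + 1).
  by rewrite divr_gt0 ?subr_gt0.
apply: filterS2 (usc z 1 ltr01) (gc z i _ d0) => w uw gw.
have gw' : (u z + 1) * p i (g w) < e.
  have : p i (g w) < p i (g z) + (e - (u z + 1) * p i (g z)) / (u z + 1).
    by rewrite -ltrBlDl; apply: le_lt_trans (seminormB_ge hq _ _) gw.
  rewrite -(ltr_pM2l uz1) mulrDr mulrCA divff ?gt_eqF // mulr1.
  by rewrite addrCA subrr addr0.
by apply: le_lt_trans gw'; rewrite ler_wpM2r ?seminorm_ge0 ?ltW.
Qed.

Lemma weighted_sup_le {R : realType} {O : Type} {Z : zmodType} {v : O -> R}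
    {q : Z -> R} {f : O -> Z} {d : R} :
  0 <= d -> (forall x, v x * q (f x) <= d) -> weighted_sup v q f <= d.
Proof.
move=> d0 vd; rewrite /weighted_sup.
have [->|ne] := eqVneq [set v x * q (f x) | x in [set: O]] set0.
  by rewrite sup0.
by apply: ge_sup; [exact/set0P | move=> _ [x _ <-]].
Qed.

Section ScaleCV0.
Variables (R : realType) (O : topologicalType) (X : lmodType R[i]) (idx : Type)
  (p : idx -> X -> R).
Hypothesis hp : lc_family p.
Variable phi : O -> R.
Hypotheses (phic : continuous phi) (phi01 : forall x, 0 <= phi x <= 1).

Let phi0 x : 0 <= phi x. Proof. by have /andP[] := phi01 x. Qed.
Let phi1 x : phi x <= 1. Proof. by have /andP[] := phi01 x. Qed.

Lemma lc_continuous_scale (f : O -> X) : lc_continuous p f ->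
  lc_continuous p (fun x => real_complex R (phi x) *: f x).
Proof.
move=> fc x i e e0; have hq := hp i.
set a := p i (f x).
have a0 : 0 < a + 1 by rewrite ltr_wpDl // seminorm_ge0.
have phi_near : \forall y \near x, `|phi x - phi y| < e / 2 / (a + 1).
  by move: (phic x) => /cvgrPdist_lt; apply; rewrite !divr_gt0.
have m0 : 0 < Num.min 1 (e / 2) by rewrite lt_min ltr01 divr_gt0.
apply: filterS2 phi_near (fc x i _ m0) => y phiy.
rewrite lt_min => /andP[fy1 fy2].
have -> : real_complex R (phi y) *: f y - real_complex R (phi x) *: f x =
    real_complex R (phi y - phi x) *: f y +
    real_complex R (phi x) *: (f y - f x).
  by rewrite rmorphB scalerBl scalerBr addrA subrK.
apply: le_lt_trans (hq.1 _ _) _.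
rewrite (seminormZ_real hq) (seminormZ_ge0 hq _ _ (phi0 x)) [e]splitr.
have fy : p i (f y) <= a + 1.
  by rewrite -lerBlDl; apply: le_trans (seminormB_ge hq _ _) (ltW fy1).
apply: ltrD.
  apply: (@le_lt_trans _ _ (`|phi y - phi x| * (a + 1))).
    exact: ler_wpM2l.
  by rewrite -ltr_pdivlMr // distrC.
by apply: le_lt_trans fy2; rewrite ler_piMl ?seminorm_ge0 ?phi1.
Qed.

Lemma vanishes_at_infinity_scale (v : O -> R) (f : O -> X) :
  vanishes_at_infinity p (fun x => real_complex R (v x) *: f x) ->
  vanishes_at_infinity p
    (fun x => real_complex R (v x) *: (real_complex R (phi x) *: f x)).
Proof.
move=> vf i e e0; apply: (subclosed_compact _ (vf i e e0)).
  exact: closed_closure.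
apply: closureS => x /=.
rewrite scalerA mulrC -scalerA (seminormZ_ge0 (hp i) _ _ (phi0 x)).
by move/le_trans; apply; rewrite ler_piMl ?seminorm_ge0 ?phi1.
Qed.

Lemma CV0_scale (V : set (O -> R)) (f : O -> X) : CV0 p V f ->
  CV0 p V (fun x => real_complex R (phi x) *: f x).
Proof.
case=> fc fv; split; first exact: lc_continuous_scale.
by move=> v Vv; apply: vanishes_at_infinity_scale; apply: fv.
Qed.

End ScaleCV0.

Lemma ler_term_sum {R : numDomainType} {T : eqType} {s : seq T} {F : T -> R}
    {y : T} :
  (forall z, 0 <= F z) -> y \in s -> F y <= \sum_(z <- s) F z.
Proof.
move=> F0; elim: s => [|a s IH] //; rewrite inE big_cons => /orP[/eqP <-|/IH].
  by rewrite lerDl sumr_ge0.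
by move/le_trans; apply; rewrite lerDr.
Qed.

Lemma compact_nbhs_subcover {T : topologicalType} {K : set T} {O : T -> set T} :
  compact K -> (forall x, K x -> nbhs x (O x)) ->
  exists s : seq T, forall x, K x -> exists2 y, y \in s & O y x.
Proof.
move=> /compact_near_coveringP cK KO.
pose F : set_system (seq T) :=
  [set S | exists s0 : seq T, forall s : seq T, {subset s0 <= s} -> S s].
have FF : Filter F.
  constructor; first by exists [::].
    move=> P Q [s0 H0] [s1 H1]; exists (s0 ++ s1) => s sub; split.
      by apply: H0 => y ys; apply: sub; rewrite mem_cat ys.
    by apply: H1 => y ys; apply: sub; rewrite mem_cat ys orbT.
  by move=> P Q PQ [s0 H0]; exists s0 => s /H0 /PQ.
pose P (s : seq T) x := exists2 y, y \in s & O y x.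
have := cK _ F P FF; case=> [x Kx|s0 H0].
  exists (O x, [set s : seq T | x \in s]) => /=.
    by split; [exact: KO | exists [:: x] => s; apply; rewrite inE].
  by case=> x' s /= [Ox' xs]; exists x.
by exists s0; apply: H0.
Qed.

Lemma filter_forall_in_seq {T : Type} {F : set_system T} {A : eqType}
    {s : seq A} {Q : A -> set T} :
  Filter F -> (forall a, a \in s -> F (Q a)) ->
  F [set x | forall a, a \in s -> Q a x].
Proof.
move=> FF; elim: s => [|b s IH] sQ; first by apply: filterS filterT => x _ a.
have Qb : F (Q b) by apply: sQ; rewrite inE eqxx.
have Qs : F [set x | forall a, a \in s -> Q a x].
  by apply: IH => a ais; apply: sQ; rewrite inE ais orbT.
by apply: filterS2 Qb Qs => x Qbx Qsx a; rewrite inE => /orP[/eqP ->|/Qsx].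
Qed.

Lemma compact_rectangle_cover {I J : topologicalType} {A : finType}
    (C : A -> set (I * J)) :
  (forall a, compact (C a)) ->
  exists (K1 : set I) (K2 : set J),
    [/\ compact K1, compact K2 & forall a w, C a w -> K1 w.1 /\ K2 w.2].
Proof.
move=> cC; exists (\big[setU/set0]_(a : A) (fst @` C a)),
  (\big[setU/set0]_(a : A) (snd @` C a)); split.
- apply: bigsetU_compact => a _; apply: continuous_compact (cC a).
  by apply: continuous_subspaceT => z; exact: cvg_fst.
- apply: bigsetU_compact => a _; apply: continuous_compact (cC a).
  by apply: continuous_subspaceT => z; exact: cvg_snd.
- move=> a w Caw; rewrite -!bigcup_seq.
  by split; exists a; rewrite /= ?mem_index_enum //; exists w.
Qed.

Lemma completely_regular_bump (R : realType) {T : topologicalType} {y : T}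
    {A : set T} :
  completely_regular_space T -> nbhs y A ->
  exists g : T -> R, [/\ continuous g, (forall x, 0 <= g x <= 1), g y = 1 &
    forall x, 0 < g x -> A x].
Proof.
move=> crT yA.
have clB : closed (~` A°) by apply: open_closedC; exact: open_interior.
have nBy : ~ (~` A°) y by move=> /(_ yA).
have [f [fc fr f0 f1]] := (uniform_separatorP (R := R) _ _).1 (crT _ _ clB nBy).
exists (fun x => 1 - f x); split.
- by move=> x; apply: cvgB; [exact: cvg_cst | exact: fc].
- move=> x; have := fr (f x) (ex_intro2 _ _ x I erefl).
  by rewrite set_itvE /= => /andP[h0 h1]; rewrite subr_ge0 h1 lerBlDr lerDl h0.
- by rewrite (f0 (f y)) ?subr0 //; exists y.
- move=> x; rewrite subr_gt0 => fx1; apply: interior_subset.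
  apply: contrapT => nAx; suff fx : f x = 1 by rewrite fx ltxx in fx1.
  by apply: f1; exists x.
Qed.

Lemma compact_bump_cover (R : realType) {T : topologicalType} {K : set T}
    {P : T -> set T} :
  completely_regular_space T -> compact K -> (forall y, K y -> nbhs y (P y)) ->
  exists (s : seq T) (g : T -> T -> R),
  [/\ forall y, continuous (g y) /\ (forall x, 0 <= g y x <= 1),
      forall y x, 0 < g y x -> P y x &
      forall x, K x -> exists2 y, y \in s & 2^-1 < g y x].
Proof.
move=> crT cK KP.
have /choice[g hg] : forall y, exists gy : T -> R,
    [/\ continuous gy, forall x, 0 <= gy x <= 1,
        K y -> gy y = 1 & forall x, 0 < gy x -> P y x].
  move=> y; have [Ky|nKy] := pselect (K y).
    by have [g [? ? ? ?]] := completely_regular_bump R crT (KP y Ky); exists g.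
  exists (fun=> 0); split => // [x|x|]; first exact: cvg_cst.
    by rewrite lexx ler01.
  by rewrite ltxx.
have [s sK] : exists s : seq T,
    forall x, K x -> exists2 y, y \in s & 2^-1 < g y x.
  apply: compact_nbhs_subcover cK _ => x Kx.
  have [gc _ gx _] := hg x.
  by apply: (cvgr_gt _ (gc x)); rewrite gx // invf_lt1 // ltr1n.
by exists s, g; split => // y; case: (hg y).
Qed.

Lemma partition_of_unity (R : realType) {T : topologicalType} {K : set T}
    {P : T -> set T} :
  completely_regular_space T -> compact K -> (forall y, K y -> nbhs y (P y)) ->
  exists (s : seq T) (phi : T -> T -> R),
  [/\ forall y, continuous (phi y) /\ (forall x, 0 <= phi y x),
      forall x, \sum_(y <- s) phi y x <= 1,
      forall x, K x -> \sum_(y <- s) phi y x = 1 &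
      forall y x, 0 < phi y x -> P y x].
Proof.
move=> crT cK KP; have [s [g [hg gP sK]]] := compact_bump_cover R crT cK KP.
have gc y : continuous (g y) by case: (hg y).
have g0 y x : 0 <= g y x by have [_ /(_ x)/andP[]] := hg y.
pose G x := \sum_(y <- s) g y x.
pose M x := Num.max (G x) 2^-1.
have M0 x : 0 < M x by rewrite lt_max invr_gt0 ltr0n orbT.
have GM x : G x <= M x by rewrite le_max lexx.
have Gc : continuous G.
  apply: (@continuous_big R^o T +%R 0 xpredT) => [|y _]; last exact: gc.
  exact: add_continuous.
have Mc : continuous M.
  by move=> x; apply: continuous_max; [exact: Gc | exact: cvg_cst].
exists s, (fun y x => g y x / M x); split.
- move=> y; split => [x|x]; last by rewrite divr_ge0 // ltW.
  by apply: cvgM; [exact: gc | apply: cvgV; [exact: lt0r_neq0 | exact: Mc]].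
- by move=> x; rewrite -mulr_suml ler_pdivrMr // mul1r; exact: GM.
- move=> x Kx; rewrite -mulr_suml; have [y ys gy] := sK x Kx.
  have Gx : 2^-1 <= G x by apply: le_trans (ltW gy) (ler_term_sum (g0^~ x) ys).
  by rewrite /M max_l // divff // gt_eqF // (lt_le_trans _ Gx).
- by move=> y x; rewrite pmulr_lgt0 ?invr_gt0 //; apply: gP.
Qed.

Lemma product_partition_of_unity (R : realType) {I J : topologicalType}
    {K1 : set I} {K2 : set J} {A : I * J -> set I} {B : I * J -> set J} :
  completely_regular_space I -> completely_regular_space J ->
  compact K1 -> compact K2 ->
  (forall z, nbhs z.1 (A z)) -> (forall z, nbhs z.2 (B z)) ->
  exists (s : seq (I * J)) (phi : I * J -> I -> R) (psi : I * J -> J -> R),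
  [/\ forall q, q \in s -> [/\ continuous (phi q), continuous (psi q),
                              forall x, 0 <= phi q x <= 1 &
                              forall y, 0 <= psi q y <= 1],
      forall x y, \sum_(q <- s) phi q x * psi q y <= 1,
      forall x y, K1 x -> K2 y -> \sum_(q <- s) phi q x * psi q y = 1 &
      forall q x y, q \in s -> 0 < phi q x * psi q y -> A q x /\ B q y].
Proof.
move=> crI crJ cK1 cK2 nA nB.
have /choice[sb hsb] : forall t, exists sb : seq J * (J -> J -> R),
  [/\ forall y, continuous (sb.2 y) /\ (forall x, 0 <= sb.2 y x),
      forall x, \sum_(y <- sb.1) sb.2 y x <= 1,
      forall x, K2 x -> \sum_(y <- sb.1) sb.2 y x = 1 &
      forall y x, 0 < sb.2 y x -> B (t, y) x].
  move=> t.
  have [s [b hb]] := partition_of_unity R crJ cK2 (fun y _ => nB (t, y)).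
  by exists (s, b).
pose At t := [set x | forall y, y \in (sb t).1 -> A (t, y) x].
have nAt t : nbhs t (At t).
  by apply: filter_forall_in_seq => y _; exact: (nA (t, y)).
have [tt [al [alc alS alK alP]]] :=
  partition_of_unity R crI cK1 (fun t _ => nAt t).
have sumE x y : \sum_(q <- [seq (t, y') | t <- tt, y' <- (sb t).1])
      al q.1 x * (sb q.1).2 q.2 y =
    \sum_(t <- tt) al t x * \sum_(y' <- (sb t).1) (sb t).2 y' y.
  by rewrite big_allpairs_dep; apply: eq_bigr => t _; rewrite mulr_sumr.
exists [seq (t, y') | t <- tt, y' <- (sb t).1], (fun q => al q.1),
  (fun q => (sb q.1).2 q.2); split.
- move=> _ /allpairsPdep[t [y' [tin yin ->]]] /=.
  have [hb hbS _ _] := hsb t.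
  split=> [||x|y]; [by case: (alc t) | by case: (hb y') | |].
    rewrite (alc t).2; apply: le_trans (alS x).
    by apply: ler_term_sum tin => z; case: (alc z).
  rewrite (hb y').2; apply: le_trans (hbS y).
  by apply: ler_term_sum yin => z; case: (hb z).
- move=> x y; rewrite sumE; apply: le_trans (alS x); apply: ler_sum => t _.
  rewrite -[leRHS]mulr1 ler_wpM2l //; first by case: (alc t).
  by case: (hsb t).
- move=> x y K1x K2y; rewrite sumE -(alK x K1x); apply: eq_bigr => t _.
  by have [_ _ -> //] := hsb t; rewrite mulr1.
- move=> _ x y /allpairsPdep[t [y' [tin yin ->]]] /=.
  have [hb _ _ bP] := hsb t.
  have al0 := (alc t).2 x; have b0 := (hb y').2 y.
  rewrite lt_def mulf_eq0 negb_or => /andP[/andP[al_neq0 b_neq0] _].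
  split; last by apply: bP; rewrite lt_def b_neq0.
  by apply: (alP t x); rewrite ?lt_def ?al_neq0.
Qed.

Definition join_ord {T : Type} {m n : nat} (a : 'I_m -> T) (b : 'I_n -> T)
    (k : 'I_(m + n)) : T :=
  match fintype.split k with inl i => a i | inr j => b j end.

Lemma join_ord_lshift {T : Type} {m n : nat} (a : 'I_m -> T) (b : 'I_n -> T) i :
  join_ord a b (lshift n i) = a i.
Proof. by rewrite /join_ord (unsplitK (inl i)). Qed.

Lemma join_ord_rshift {T : Type} {m n : nat} (a : 'I_m -> T) (b : 'I_n -> T) j :
  join_ord a b (rshift m j) = b j.
Proof. by rewrite /join_ord (unsplitK (inr j)). Qed.

Section FunTensorSpan.
Context {R : realType} {I J : Type} {X Y Z : lmodType R[i]}.
Context {tens : X -> Y -> Z} {F : set (I -> X)} {G : set (J -> Y)}.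
Local Notation span := (fun_tensor_span tens F G).

Lemma fun_tensor_span0 : span (fun _ => 0).
Proof.
exists 0, (fun _ => 0), (fun _ _ => 0), (fun _ _ => 0); split; first by case.
by apply/funext => ts; rewrite big_ord0.
Qed.

Lemma fun_tensor_spanD h1 h2 : span h1 -> span h2 -> span (h1 \+ h2).
Proof.
case=> [n1 [c1 [f1 [g1 [H1 ->]]]]] [n2 [c2 [f2 [g2 [H2 ->]]]]].
exists (n1 + n2), (join_ord c1 c2), (join_ord f1 f2), (join_ord g1 g2); split.
  by move=> k; rewrite /join_ord; case: (fintype.split k).
apply/funext => ts; rewrite big_split_ord /=.
congr (_ + _); apply: eq_bigr => i _.
  by rewrite !join_ord_lshift.
by rewrite !join_ord_rshift.
Qed.

Lemma fun_tensor_span_sum (T : eqType) (s : seq T) (H : T -> I * J -> Z) :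
  (forall q, q \in s -> span (H q)) -> span (fun ts => \sum_(q <- s) H q ts).
Proof.
elim: s => [|a s IH] sH.
  by under eq_fun do rewrite big_nil; exact: fun_tensor_span0.
under eq_fun do rewrite big_cons.
apply: fun_tensor_spanD; first by apply: sH; rewrite inE eqxx.
by apply: IH => q qs; apply: sH; rewrite inE qs orbT.
Qed.

Lemma fun_tensor_span_evals {t : I} {s : J} {z : Z} :
  tensor_span tens (evals F t) (evals G s) z ->
  exists2 h, span h & h (t, s) = z.
Proof.
case=> m [c [x [y [xy ->]]]].
have /choice[f hf] : forall k, exists f, F f /\ f t = x k.
  by move=> k; have [[f ? ?] _] := xy k; exists f.
have /choice[g hg] : forall k, exists g, G g /\ g s = y k.
  by move=> k; have [_ [g ? ?]] := xy k; exists g.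
exists (fun ts => \sum_(k < m) c k *: tens (f k ts.1) (g k ts.2)).
  by exists m, c, f, g; split => // k; split; [case: (hf k) | case: (hg k)].
by apply: eq_bigr => k _ /=; rewrite (hf k).2 (hg k).2.
Qed.

Hypothesis tens_bilinear : bilinear_map tens.

Lemma fun_tensor_spanZ (phi : I -> R) (psi : J -> R) h :
  (forall f, F f -> F (fun x => real_complex R (phi x) *: f x)) ->
  (forall g, G g -> G (fun y => real_complex R (psi y) *: g y)) ->
  span h -> span (fun ts => real_complex R (phi ts.1 * psi ts.2) *: h ts).
Proof.
move=> hF hG [n [c [f [g [H ->]]]]].
exists n, c, (fun k x => real_complex R (phi x) *: f k x),
  (fun k y => real_complex R (psi y) *: g k y); split.
  by move=> k; have [Hf Hg] := H k; split; [apply: hF | apply: hG].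
apply/funext => ts; rewrite scaler_sumr; apply: eq_bigr => k _.
rewrite (GRing.scalable_linear (tens_bilinear.1 _)).
rewrite (GRing.scalable_linear (tens_bilinear.2 _)).
by rewrite !scalerA rmorphM mulrC mulrA.
Qed.

End FunTensorSpan.

Section WeightedApproximation.
Context {R : realType} {I J : topologicalType} {X Y Z : lmodType R[i]}
  {iX iY iZ : Type} {pX : iX -> X -> R} {pY : iY -> Y -> R} {pZ : iZ -> Z -> R}
  {tens : X -> Y -> Z} {V : set (I -> R)} {W : set (J -> R)}
  {U : set (I * J -> R)}.
Hypotheses (crI : completely_regular_space I)
  (crJ : completely_regular_space J).
Hypotheses (hpX : lc_family pX) (hpY : lc_family pY) (hpZ : lc_family pZ).
Hypothesis tens_bilinear : bilinear_map tens.
Hypothesis nU : nachbin_family U.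
Hypothesis dense_at : forall (t : I) (s : J),
  lc_closure setT pZ
    (tensor_span tens (evals (CV0 pX V) t) (evals (CV0 pY W) s)) =
  lc_closure setT pZ (evals (CV0 pZ U) (t, s)).
Hypothesis span_sub : fun_tensor_span tens (CV0 pX V) (CV0 pY W) `<=` CV0 pZ U.
Local Notation span := (fun_tensor_span tens (CV0 pX V) (CV0 pY W)).

Context {F : I * J -> Z} {n : nat}.
Variables (u : 'I_n -> I * J -> R) (r : 'I_n -> iZ).
Hypotheses (hF : CV0 pZ U F) (Uu : forall j, U (u j)).

Let u_usc j : upper_semicont (u j).
Proof. by case: nU => /(_ _ (Uu j))[]. Qed.

Let u_ge0 j w : 0 <= u j w.
Proof. by case: nU => /(_ _ (Uu j))[_]. Qed.

Lemma span_approx_at (z : I * J) {d : R} :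
  0 < d -> exists2 h, span h & forall j, pZ (r j) (F z - h z) < d.
Proof.
case: z => t s d0.
have : lc_closure setT pZ (evals (CV0 pZ U) (t, s)) (F (t, s)).
  move=> m k _ e e0; exists (F (t, s)); first by exists F.
  by move=> j; rewrite subrr (seminorm0 (hpZ _)).
rewrite -(dense_at t s) => /(_ n r (fun=> Logic.I) d d0)[a ta ha].
have [h hspan hts] := fun_tensor_span_evals ta.
by exists h; rewrite // hts.
Qed.

Lemma span_approx_near (z : I * J) {e : R} : 0 < e ->
  exists2 h, span h &
    \forall w \near z, forall j, u j w * pZ (r j) (F w - h w) < e.
Proof.
move=> e0; set S := \sum_(j < n) u j z.
have S1 : 0 < S + 1 by rewrite ltr_wpDl // sumr_ge0.
have [h hspan hz] := span_approx_at z (divr_gt0 e0 S1).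
exists h => //; apply: (filter_forall (nbhs_filter z)) => j.
apply: (upper_semicont_seminorm_near (r j) (u j) (fun w => F w - h w) z _ hpZ
  (u_usc j) (u_ge0 j z)).
  apply: (lc_continuousB hpZ); [exact: hF.1 | by case: (span_sub _ hspan)].
have uS : u j z + 1 <= S + 1 by rewrite lerD2r /S (bigD1 j) //= lerDl sumr_ge0.
apply: le_lt_trans (ler_wpM2r (seminorm_ge0 (hpZ _) _) uS) _.
by rewrite mulrC -ltr_pdivlMr.
Qed.

Lemma span_weighted_approx {e : R} : 0 < e ->
  exists2 a, span a & forall j w, u j w * pZ (r j) (F w - a w) <= e.
Proof.
move=> e0.
have /choice[h hh] : forall z : I * J, exists h, span h /\
    \forall w \near z, forall j, u j w * pZ (r j) (F w - h w) < e.
  by move=> z; have [h ? ?] := span_approx_near z e0; exists h.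
have /choice[AB hAB] : forall z : I * J, exists AB : set I * set J,
    [/\ nbhs z.1 AB.1, nbhs z.2 AB.2 & forall x y, AB.1 x -> AB.2 y -> forall j,
      u j (x, y) * pZ (r j) (F (x, y) - h z (x, y)) < e].
  move=> z; have [_ [[A B] /= [nA nB] ABe]] := hh z.
  by exists (A, B); split => // x y Ax By; apply: (ABe (x, y)).
have [K1 [K2 [cK1 cK2 K12]]] := compact_rectangle_cover
  (fun j => closure [set w | e <= pZ (r j) (real_complex R (u j w) *: F w)])
  (fun j => hF.2 _ (Uu j) _ _ e0).
have nA z : nbhs z.1 (AB z).1 by case: (hAB z).
have nB z : nbhs z.2 (AB z).2 by case: (hAB z).
have [s [phi [psi [hs sum_le1 sum_eq1 supp]]]] :=
  product_partition_of_unity R crI crJ cK1 cK2 nA nB.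
exists (fun w => \sum_(q <- s) real_complex R (phi q w.1 * psi q w.2) *: h q w).
  apply: fun_tensor_span_sum => q qs; have [phic psic phi01 psi01] := hs q qs.
  apply: fun_tensor_spanZ => //; last by case: (hh q).
    by move=> f; apply: CV0_scale.
  by move=> g; apply: CV0_scale.
move=> j [x y] /=.
apply: (seminorm_sub_convex_sum (hpZ _) (u_ge0 j _)) => [q qs|||q qs].
- by have [_ _ /(_ x)/andP[? _] /(_ y)/andP[? _]] := hs q qs; exact: mulr_ge0.
- exact: sum_le1.
- have [[K1x K2y]|notK] := pselect (K1 x /\ K2 y).
    by left; exact: sum_eq1.
  right; rewrite -(seminormZ_ge0 (hpZ _) _ _ (u_ge0 j _)) leNgt.
  apply/negP => le.
  by apply: notK; apply: (K12 j (x, y)); apply: subset_closure; exact: ltW.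
- move=> /(supp q x y qs)[Ax By]; apply: ltW.
  by have [_ _] := hAB q; apply.
Qed.

End WeightedApproximation.

Theorem theorem3p24 (R : realType) (I J : topologicalType)
  (X Y Z : lmodType R[i]) (iX iY iZ : Type)
  (pX : iX -> X -> R) (pY : iY -> Y -> R) (pZ : iZ -> Z -> R)
  (tens : X -> Y -> Z)
  (V : set (I -> R)) (W : set (J -> R)) (U : set (I * J -> R)) :
  hausdorff_space I -> completely_regular_space I ->
  hausdorff_space J -> completely_regular_space J ->
  lc_family pX -> lc_hausdorff pX ->
  lc_family pY -> lc_hausdorff pY ->
  is_tensor_product tens ->
  lc_family pZ -> lc_hausdorff pZ ->
  tensor_continuous pX pY pZ tens ->
  nachbin_family V -> nachbin_family W -> nachbin_family U ->
  (forall (t : I) (s : J),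
     lc_closure setT pZ
       (tensor_span tens (evals (CV0 pX V) t) (evals (CV0 pY W) s)) =
     lc_closure setT pZ (evals (CV0 pZ U) (t, s))) ->
  fun_tensor_span tens (CV0 pX V) (CV0 pY W) `<=` CV0 pZ U ->
  CV0 pZ U =
    CV0 pZ U `&` lc_closure (CV0_index U) (CV0_seminorm pZ)
                   (fun_tensor_span tens (CV0 pX V) (CV0 pY W)).
Proof.
move=> _ crI _ crJ hpX _ hpY _ [tens_bilinear _] hpZ _ _ _ _ nU dense_at
  span_sub.
apply/seteqP; split=> [F hF|F []//]; split=> // n k kU e e0.
have e2 : 0 < e / 2 by rewrite divr_gt0.
have [a aspan ha] := span_weighted_approx crI crJ hpX hpY hpZ tens_bilinear nU
  dense_at span_sub (fun j => (k j).1) (fun j => (k j).2) hF kU e2.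
exists a => // j; apply: le_lt_trans (weighted_sup_le (ltW e2) (ha j)) _.
by rewrite ltr_pdivrMr // ltr_pMr // ltr1n.
Qed.
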